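(* Let $\gamma>0$ and $\alpha=2/\gamma^2$. Then for all $z\in\mathbb{C}$ and $x\in\mathbb{R}$, $$\mathcal{A}^\gamma_{RBF}(z,x)=\exp\left(-\frac{z^2}{\gamma^2}\right)\mathcal{A}^\alpha_{SB}(z,x).$$
   Context: For $\alpha>0$, the Segal–Bargmann kernel is $\mathcal{A}^\alpha_{SB}(z,x)=\left(\frac{\alpha}{\pi}\right)^{1/4}\exp\left(-\frac{\alpha}{2}(z^2+x^2)+\sqrt2\,\alpha zx\right)$. The normalized weighted Hermite functions are $\psi_n^\alpha(x)=\left(\frac{\alpha}{\pi}\right)^{1/4}(2^nn!)^{-1/2}H_n(\sqrt\alpha\,x)e^{-\alpha x^2/2}$, $n\ge0$, where $H_n$ are the physicists' Hermite polynomials; they form an orthonormal basis of $L^2(\mathbb{R})$. For $\gamma>0$, $e_n^\gamma(z)=\sqrt{\frac{2^n}{\gamma^{2n}n!}}\,z^n\exp(-z^2/\gamma^2)$, and the RBF Segal–Bargmann kernel is $\mathcal{A}^\gamma_{RBF}(z,x)=\sum_{n=0}^\infty e_n^\gamma(z)\psi_n^{\alpha}(x)$ with $\alpha=2/\gamma^2$. *)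

From Stdlib Require Import Reals.
From Coquelicot Require Export Coquelicot.
Open Scope R_scope.

Definition cexp (z : C) : C :=
  (exp (Re z) * cos (Im z), exp (Re z) * sin (Im z)).

Fixpoint Cpow (z : C) (n : nat) : C :=
  match n with O => RtoC 1 | S m => Cmult z (Cpow z m) end.

(* physicists' Hermite polynomials: H_0 = 1, H_1 = 2x,
   H_{n+2} = 2x H_{n+1} - 2(n+1) H_n *)
Fixpoint hermite_aux (n : nat) (x : R) : R * R :=
  (* returns (H_n x, H_{n+1} x) *)
  match n with
  | O => (1, 2 * x)
  | S m => let (a, b) := hermite_aux m x in
           (b, 2 * x * b - 2 * INR (S m) * a)
  end.
Definition hermite (n : nat) (x : R) : R := fst (hermite_aux n x).

Definition psi (alpha : R) (n : nat) (x : R) : R :=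
  Rpower (alpha / PI) (1/4) / sqrt (2 ^ n * INR (Factorial.fact n))
  * hermite n (sqrt alpha * x) * exp (- alpha * x ^ 2 / 2).

Definition e_rbf (gamma : R) (n : nat) (z : C) : C :=
  Cmult (RtoC (sqrt (2 ^ n / (gamma ^ (2 * n) * INR (Factorial.fact n)))))
        (Cmult (Cpow z n) (cexp (Cdiv (Copp (Cmult z z)) (RtoC (gamma ^ 2))))).

Definition A_SB (alpha : R) (z : C) (x : R) : C :=
  Cmult (RtoC (Rpower (alpha / PI) (1/4)))
    (cexp (Cplus (Cmult (RtoC (- alpha / 2)) (Cplus (Cmult z z) (RtoC (x ^ 2))))
                 (Cmult (RtoC (sqrt 2 * alpha * x)) z))).

(* With t = sqrt(alpha) x and w = z / gamma, the n-th term of the series is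
   exp(-z^2/gamma^2) (alpha/pi)^(1/4) exp(-alpha x^2/2) times H_n(t) w^n / n!, and the
   Segal-Bargmann kernel is the same prefactor times exp(2 t w - w^2).  So everything
   reduces to the generating function sum_n H_n(t) w^n / n! = exp(2 t w - w^2) at a
   complex point w.  The bound (H_n(t) / n!)^2 n! <= (8 t^2 + 8)^n makes
   F(s) = sum_n H_n(t) / n! (s w)^n an entire power series in the real variable s; the
   three-term recurrence of the H_n turns into the linear ODE F' = (2 t w - 2 w^2 s) F,
   so F(s) exp(-(2 t w s - w^2 s^2)) has derivative zero and F(1) = exp(2 t w - w^2). *)

From Pilot Require Import Defs.
From Stdlib Require Import Reals Lra Lia Psatz Factorial.
From Coquelicot Require Import Coquelicot.
Open Scope R_scope.

Lemma hermite_SS n t :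
  hermite (S (S n)) t = 2 * t * hermite (S n) t - 2 * INR (S n) * hermite n t.
Proof.
  unfold hermite; simpl hermite_aux at 1 2.
  now destruct (hermite_aux n t).
Qed.

Definition hermite_coef (t : R) (n : nat) : R := hermite n t / INR (fact n).

Lemma hermite_coef_0 t : hermite_coef t 0 = 1.
Proof. unfold hermite_coef, hermite; simpl; field. Qed.

Lemma hermite_coef_1 t : hermite_coef t 1 = 2 * t.
Proof. unfold hermite_coef, hermite; simpl; field. Qed.

Lemma hermite_coef_SS t n :
  INR (S (S n)) * hermite_coef t (S (S n))
  = 2 * t * hermite_coef t (S n) - 2 * hermite_coef t n.
Proof.
  unfold hermite_coef; rewrite hermite_SS.
  change (fact (S (S n))) with (S (S n) * (S n * fact n))%nat.
  change (fact (S n)) with (S n * fact n)%nat.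
  rewrite !mult_INR.
  pose proof (INR_fact_neq_0 n).
  pose proof (not_0_INR (S n) (Nat.neq_succ_0 n)).
  pose proof (not_0_INR (S (S n)) (Nat.neq_succ_0 _)).
  field; auto.
Qed.

Lemma le_pow_of_two_step_le (u : nat -> R) (A B N : R) :
  0 <= A -> 0 <= B -> 0 <= N -> A * N + B <= N ^ 2 ->
  u 0%nat <= 1 -> u 1%nat <= N ->
  (forall n, u (S (S n)) <= A * u (S n) + B * u n) ->
  forall n, u n <= N ^ n.
Proof.
  intros HA HB HN HAB H0 H1 Hrec.
  enough (H : forall n, u n <= N ^ n /\ u (S n) <= N ^ S n) by (intro n; apply H).
  induction n as [|n [IH0 IH1]]; [simpl; lra|].
  split; [exact IH1|].
  assert (HNn : 0 <= N ^ n) by now apply pow_le.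
  apply (Rle_trans _ _ _ (Hrec n)).
  apply Rle_trans with (A * N ^ S n + B * N ^ n).
  - apply Rplus_le_compat; apply Rmult_le_compat_l; assumption.
  - replace (A * N ^ S n + B * N ^ n) with (N ^ n * (A * N + B)) by (simpl; ring).
    replace (N ^ S (S n)) with (N ^ n * N ^ 2) by (simpl; ring).
    now apply Rmult_le_compat_l.
Qed.

Lemma hermite_coef_sq_fact_step t n :
  hermite_coef t (S (S n)) ^ 2 * INR (fact (S (S n)))
  <= 8 * t ^ 2 * (hermite_coef t (S n) ^ 2 * INR (fact (S n)))
     + 8 * (hermite_coef t n ^ 2 * INR (fact n)).
Proof.
  pose proof (hermite_coef_SS t n) as Hrec.
  set (h2 := hermite_coef t (S (S n))) in *; set (h1 := hermite_coef t (S n)) in *;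
    set (h0 := hermite_coef t n) in *.
  change (fact (S (S n))) with (S (S n) * (S n * fact n))%nat.
  change (fact (S n)) with (S n * fact n)%nat.
  rewrite !mult_INR, !S_INR in *.
  set (f := INR (fact n)) in *; set (m := INR n) in *.
  assert (Hf : 0 < f) by apply INR_fact_lt_0.
  assert (Hm : 0 <= m) by apply pos_INR.
  assert (Hsq : (2 * t * h1 - 2 * h0) ^ 2 <= 8 * t ^ 2 * h1 ^ 2 + 8 * h0 ^ 2)
    by (pose proof (pow2_ge_0 (t * h1 + h0)); nra).
  (* multiplying by n + 2 lets the recurrence trade (n + 2) h2 for 2 t h1 - 2 h0 *)
  apply Rmult_le_reg_l with (m + 1 + 1); [lra|].
  replace ((m + 1 + 1) * (h2 ^ 2 * ((m + 1 + 1) * ((m + 1) * f))))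
    with ((2 * t * h1 - 2 * h0) ^ 2 * ((m + 1) * f)) by (rewrite <- Hrec; ring).
  assert (Hmf : 0 <= (m + 1) * f) by nra.
  pose proof (Rmult_le_compat_r _ _ _ Hmf Hsq).
  assert (0 <= t ^ 2 * h1 ^ 2 * ((m + 1) * f)) by (apply Rmult_le_pos; nra).
  assert (0 <= h0 ^ 2 * f) by nra.
  nra.
Qed.

Lemma hermite_coef_sq_fact_le t n :
  hermite_coef t n ^ 2 * INR (fact n) <= (8 * t ^ 2 + 8) ^ n.
Proof.
  apply (le_pow_of_two_step_le (fun n => hermite_coef t n ^ 2 * INR (fact n)) (8 * t ^ 2) 8);
    [nra|lra|nra|nra| | |apply hermite_coef_sq_fact_step].
  - rewrite hermite_coef_0; simpl; lra.
  - rewrite hermite_coef_1; simpl; nra.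
Qed.

Lemma pow_div_fact_le_exp x n : 0 <= x -> x ^ n / INR (fact n) <= exp x.
Proof.
  intros Hx.
  apply Rle_trans with (2 := exp_ge_taylor x n Hx).
  assert (Hterm : forall k, 0 <= x ^ k / INR (fact k))
    by (intro k; apply Rdiv_le_0_compat; [now apply pow_le|apply INR_fact_lt_0]).
  destruct n as [|n]; [simpl; lra|].
  rewrite tech5.
  pose proof (cond_pos_sum _ n Hterm); lra.
Qed.

Lemma hermite_coef_bounded t r :
  0 <= r -> exists M, forall n, Rabs (hermite_coef t n) * r ^ n <= M.
Proof.
  intros Hr.
  set (K := (8 * t ^ 2 + 8) * r ^ 2).
  assert (HK : 0 <= K) by (unfold K; nra).
  exists (exp K); intro n.
  set (v := Rabs (hermite_coef t n) * r ^ n).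
  assert (Hv : 0 <= v) by (apply Rmult_le_pos; [apply Rabs_pos|now apply pow_le]).
  assert (Hv2 : v ^ 2 <= exp K).
  { apply Rle_trans with (2 := pow_div_fact_le_exp K n HK).
    pose proof (INR_fact_lt_0 n) as Hf.
    pose proof (hermite_coef_sq_fact_le t n) as Hb.
    unfold v, K.
    rewrite !Rpow_mult_distr, pow2_abs, <- pow_mult, Nat.mul_comm, pow_mult.
    apply Rmult_le_reg_r with (INR (fact n)); [assumption|].
    replace ((8 * t ^ 2 + 8) ^ n * (r ^ 2) ^ n / INR (fact n) * INR (fact n))
      with ((8 * t ^ 2 + 8) ^ n * (r ^ 2) ^ n) by (field; lra).
    replace (hermite_coef t n ^ 2 * (r ^ 2) ^ n * INR (fact n))
      with ((hermite_coef t n ^ 2 * INR (fact n)) * (r ^ 2) ^ n) by ring.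
    apply Rmult_le_compat_r; [apply pow_le; nra|assumption]. }
  pose proof (exp_ineq1_le K); nra.
Qed.

Lemma CV_radius_infinite_of_bounded (a : nat -> R) :
  (forall r, 0 <= r -> exists M, forall n, Rabs (a n) * r ^ n <= M) ->
  CV_radius a = p_infty.
Proof.
  intros Hb.
  assert (Hle : forall r, 0 <= r -> Rbar_le r (CV_radius a)).
  { intros r Hr. apply (proj1 (CV_radius_bounded a)).
    destruct (Hb r Hr) as [M HM]. exists M; intro n.
    rewrite Rabs_mult, <- RPow_abs, (Rabs_pos_eq r Hr). apply HM. }
  pose proof (CV_radius_ge_0 a) as H0.
  destruct (CV_radius a) as [R0| |]; [|reflexivity|contradiction].
  exfalso. specialize (Hle (Rabs R0 + 1)).
  simpl in Hle. pose proof (Rle_abs R0). pose proof (Rabs_pos R0).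
  assert (Rabs R0 + 1 <= R0) by (apply Hle; lra). lra.
Qed.

Lemma cexp_plus (a b : C) : cexp (a + b)%C = (cexp a * cexp b)%C.
Proof.
  destruct a as [a1 a2], b as [b1 b2].
  unfold cexp, Cmult, Cplus, Re, Im; simpl.
  rewrite exp_plus, cos_plus, sin_plus; f_equal; ring.
Qed.

Lemma cexp_RtoC (a : R) : cexp (RtoC a) = RtoC (exp a).
Proof. unfold cexp, RtoC, Re, Im; simpl; rewrite cos_0, sin_0; f_equal; ring. Qed.

Lemma sum_n_Re (a : nat -> C) n : Re (sum_n a n) = sum_n (fun k => Re (a k)) n.
Proof. induction n; [now rewrite !sum_O|now rewrite !sum_Sn, <- IHn]. Qed.

Lemma sum_n_Im (a : nat -> C) n : Im (sum_n a n) = sum_n (fun k => Im (a k)) n.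
Proof. induction n; [now rewrite !sum_O|now rewrite !sum_Sn, <- IHn]. Qed.

Lemma is_series_C (a : nat -> C) (l : C) :
  is_series a l <->
  is_series (fun n => Re (a n)) (Re l) /\ is_series (fun n => Im (a n)) (Im l).
Proof.
  unfold is_series; split.
  - intros H; split; apply filterlim_locally; intros eps;
      destruct (proj1 (filterlim_locally _ _) H eps) as [N HN]; exists N; intros n Hn.
    + rewrite <- sum_n_Re; apply (HN n Hn).
    + rewrite <- sum_n_Im; apply (HN n Hn).
  - intros [H1 H2]; apply filterlim_locally; intros eps.
    destruct (proj1 (filterlim_locally _ _) H1 eps) as [N1 HN1],
      (proj1 (filterlim_locally _ _) H2 eps) as [N2 HN2].
    exists (max N1 N2); intros n Hn; split.
    + change (ball (Re l) eps (Re (sum_n a n))); rewrite sum_n_Re; apply HN1; lia.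
    + change (ball (Im l) eps (Im (sum_n a n))); rewrite sum_n_Im; apply HN2; lia.
Qed.

(* Coquelicot's differential and power-series calculus is real, so complex-valued
   functions of a real variable are handled through their real and imaginary parts. *)
Definition is_derive_C (f : R -> C) (x : R) (l : C) : Prop :=
  is_derive (fun s => Re (f s)) x (Re l) /\ is_derive (fun s => Im (f s)) x (Im l).

Lemma is_derive_C_mult (f g : R -> C) (x : R) (l m : C) :
  is_derive_C f x l -> is_derive_C g x m ->
  is_derive_C (fun s => f s * g s)%C x (l * g x + f x * m)%C.
Proof.
  intros [Hf1 Hf2] [Hg1 Hg2].
  pose proof (fun f g df dg Hf Hg =>
    is_derive_mult (K := R_AbsRing) f g x df dg Hf Hg Rmult_comm) as Hmult.
  split.
  - eapply is_derive_ext; [intros s; symmetry; apply re_mult|].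
    refine (eq_ind _ (is_derive _ x)
      (is_derive_minus _ _ _ _ _ (Hmult _ _ _ _ Hf1 Hg1) (Hmult _ _ _ _ Hf2 Hg2)) _ _).
    rewrite re_plus, !re_mult; unfold minus, plus, mult, opp; simpl; ring.
  - eapply is_derive_ext; [intros s; symmetry; apply im_mult|].
    refine (eq_ind _ (is_derive _ x)
      (is_derive_plus _ _ _ _ _ (Hmult _ _ _ _ Hf1 Hg2) (Hmult _ _ _ _ Hf2 Hg1)) _ _).
    rewrite im_plus, !im_mult; unfold plus, mult; simpl; ring.
Qed.

Lemma is_derive_C_cexp (g : R -> C) (x : R) (l : C) :
  is_derive_C g x l -> is_derive_C (fun s => cexp (g s)) x (l * cexp (g x))%C.
Proof.
  intros [Hre Him].
  pose proof (is_derive_comp exp _ x _ _ (is_derive_exp _) Hre) as Hexp.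
  pose proof (fun f g df dg Hf Hg =>
    is_derive_mult (K := R_AbsRing) f g x df dg Hf Hg Rmult_comm) as Hmult.
  split.
  - refine (eq_ind _ (is_derive _ x)
      (Hmult _ _ _ _ Hexp (is_derive_comp cos _ x _ _ (is_derive_cos _) Him)) _ _).
    unfold cexp, Cmult, Re, Im, plus, mult, scal; simpl; unfold mult; simpl; ring.
  - refine (eq_ind _ (is_derive _ x)
      (Hmult _ _ _ _ Hexp (is_derive_comp sin _ x _ _ (is_derive_sin _) Him)) _ _).
    unfold cexp, Cmult, Re, Im, plus, mult, scal; simpl; unfold mult; simpl; ring.
Qed.

Lemma is_derive_C_zero_const (f : R -> C) :
  (forall s, is_derive_C f s (RtoC 0)) -> forall a b, f a = f b.
Proof.
  intros Hf.
  assert (Hlt : forall a b, a < b -> f a = f b).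
  { intros a b Hab; apply injective_projections.
    - apply (eq_is_derive (fun s => Re (f s))); [intros s _; apply Hf|exact Hab].
    - apply (eq_is_derive (fun s => Im (f s))); [intros s _; apply Hf|exact Hab]. }
  intros a b; destruct (Rtotal_order a b) as [H|[->|H]]; auto.
  symmetry; auto.
Qed.

Lemma linear_ode_C (F : R -> C) (u v : C) :
  (forall s, is_derive_C F s ((u + 2 * v * s) * F s)%C) ->
  forall s, F s = (F 0 * cexp (u * s + v * s * s))%C.
Proof.
  intros HF s.
  set (g := fun s : R => (u * s + v * s * s)%C).
  assert (Hg : forall s, is_derive_C (fun s => - g s)%C s (- (u + 2 * v * s))%C).
  { intros r; unfold g; destruct u as [u1 u2], v as [v1 v2].
    split; unfold Re, Im, Copp, Cplus, Cmult, RtoC; simpl; auto_derive; auto; ring. }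
  assert (Hconst : forall r, is_derive_C (fun s => F s * cexp (- g s))%C r (RtoC 0)).
  { intros r.
    pose proof (is_derive_C_mult _ _ r _ _ (HF r) (is_derive_C_cexp _ r _ (Hg r))) as H.
    replace (RtoC 0)
      with ((u + 2 * v * r) * F r * cexp (- g r) + F r * (- (u + 2 * v * r) * cexp (- g r)))%C
      by ring.
    exact H. }
  assert (Hinv : forall r, (cexp (- g r) * cexp (g r))%C = (RtoC 1)).
  { intros r; rewrite <- cexp_plus.
    replace (- g r + g r)%C with (RtoC 0) by ring.
    now rewrite cexp_RtoC, exp_0. }
  assert (Hg0 : g 0 = RtoC 0) by (unfold g; ring).
  rewrite <- (Cmult_1_r (F s)), <- (Hinv s), Cmult_assoc.
  rewrite <- (is_derive_C_zero_const _ Hconst 0 s).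
  now rewrite Hg0, Copp_0, cexp_RtoC, exp_0, Cmult_1_r.
Qed.

Definition CPSeries (c : nat -> C) (s : R) : C :=
  (PSeries (fun n => Re (c n)) s, PSeries (fun n => Im (c n)) s).

Section ComplexPowerSeries.

Variable c : nat -> C.
Hypothesis c_bounded : forall r, 0 <= r -> exists M, forall n, Cmod (c n) * r ^ n <= M.

Lemma CV_radius_Re : CV_radius (fun n => Re (c n)) = p_infty.
Proof.
  apply CV_radius_infinite_of_bounded; intros r Hr.
  destruct (c_bounded r Hr) as [M HM]; exists M; intro n.
  apply Rle_trans with (2 := HM n), Rmult_le_compat_r; [now apply pow_le|].
  apply re_le_Cmod.
Qed.

Lemma CV_radius_Im : CV_radius (fun n => Im (c n)) = p_infty.
Proof.
  apply CV_radius_infinite_of_bounded; intros r Hr.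
  destruct (c_bounded r Hr) as [M HM]; exists M; intro n.
  apply Rle_trans with (2 := HM n), Rmult_le_compat_r; [now apply pow_le|].
  apply Rle_trans with (2 := Rmax_Cmod (c n)), Rmax_r.
Qed.

Lemma is_series_CPSeries s : is_series (fun n => c n * RtoC (s ^ n))%C (CPSeries c s).
Proof.
  apply is_series_C; split.
  - eapply is_series_ext;
      [|apply PSeries_correct, CV_radius_inside; rewrite CV_radius_Re; exact I].
    intro n; rewrite re_scal_r, pow_n_pow; apply Rmult_comm.
  - eapply is_series_ext;
      [|apply PSeries_correct, CV_radius_inside; rewrite CV_radius_Im; exact I].
    intro n; rewrite im_scal_r, pow_n_pow; apply Rmult_comm.
Qed.

Lemma is_derive_CPSeries s l :
  is_series (fun n => INR (S n) * c (S n) * RtoC (s ^ n))%C l ->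
  is_derive_C (CPSeries c) s l.
Proof.
  intros [Hre Him]%is_series_C; split.
  - replace (Re l) with (PSeries (PS_derive (fun n => Re (c n))) s).
    + apply is_derive_PSeries; rewrite CV_radius_Re; exact I.
    + apply is_pseries_unique; eapply is_series_ext; [|exact Hre].
      intro n; cbv beta; rewrite re_scal_r, re_scal_l.
      symmetry; rewrite pow_n_pow; unfold PS_derive, scal, mult; cbn; ring.
  - replace (Im l) with (PSeries (PS_derive (fun n => Im (c n))) s).
    + apply is_derive_PSeries; rewrite CV_radius_Im; exact I.
    + apply is_pseries_unique; eapply is_series_ext; [|exact Him].
      intro n; cbv beta; rewrite im_scal_r, im_scal_l.
      symmetry; rewrite pow_n_pow; unfold PS_derive, scal, mult; cbn; ring.
Qed.

Lemma is_derive_CPSeries_of_rec (u v : C) :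
  c 1%nat = (u * c 0%nat)%C ->
  (forall n, INR (S (S n)) * c (S (S n)) = u * c (S n) + v * c n)%C ->
  forall s, is_derive_C (CPSeries c) s ((u + v * s) * CPSeries c s)%C.
Proof.
  intros H1 Hrec s; apply is_derive_CPSeries.
  set (shifted := fun n => match n with O => RtoC 0 | S m => (c m * RtoC (s ^ m))%C end).
  assert (Hshift : is_series shifted (CPSeries c s)).
  { apply is_series_decr_1.
    match goal with |- is_series _ ?l => replace l with (CPSeries c s)
      by (unfold plus, opp, shifted; simpl; ring) end.
    exact (is_series_CPSeries s). }
  pose proof (is_series_plus _ _ _ _ (is_series_scal u _ _ (is_series_CPSeries s))
    (is_series_scal (v * s)%C _ _ Hshift)) as H.
  match type of H with is_series _ ?l =>
    replace l with ((u + v * s) * CPSeries c s)%C in H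
      by (transitivity (u * CPSeries c s + v * s * CPSeries c s)%C; [ring|reflexivity])
  end.
  eapply is_series_ext; [|exact H].
  intros [|n]; cbv beta; unfold shifted.
  - transitivity (u * (c O * RtoC 1) + v * s * RtoC 0)%C; [reflexivity|].
    rewrite H1; simpl; ring.
  - transitivity (u * (c (S n) * RtoC (s ^ S n)) + v * s * (c n * RtoC (s ^ n)))%C;
      [reflexivity|].
    rewrite Hrec; simpl; rewrite RtoC_mult; ring.
Qed.

End ComplexPowerSeries.

Lemma hermite_generating_function (t : R) (w : C) :
  is_series (fun n => RtoC (hermite_coef t n) * Cpow w n)%C (cexp (2 * t * w - w * w))%C.
Proof.
  set (c := fun n => (RtoC (hermite_coef t n) * Cpow w n)%C).
  assert (Hc : forall r, 0 <= r -> exists M, forall n, Cmod (c n) * r ^ n <= M).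
  { intros r Hr.
    destruct (hermite_coef_bounded t (Cmod w * r)) as [M HM];
      [apply Rmult_le_pos; [apply Cmod_ge_0|exact Hr]|].
    exists M; intro n; unfold c.
    rewrite Cmod_mult, Cmod_R, Cmod_pow, Rmult_assoc, <- Rpow_mult_distr; apply HM. }
  assert (H1 : c 1%nat = (2 * t * w * c 0%nat)%C).
  { unfold c; rewrite hermite_coef_1, hermite_coef_0, RtoC_mult; simpl; ring. }
  assert (Hrec : forall n,
    (INR (S (S n)) * c (S (S n)) = 2 * t * w * c (S n) + 2 * - (w * w) * c n)%C).
  { intro n; unfold c.
    transitivity (RtoC (INR (S (S n)) * hermite_coef t (S (S n))) * Cpow w (S (S n)))%C;
      [rewrite RtoC_mult; ring|].
    rewrite hermite_coef_SS, RtoC_minus, !RtoC_mult; simpl; ring. }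
  pose proof (linear_ode_C _ _ _ (is_derive_CPSeries_of_rec c Hc _ _ H1 Hrec) 1) as HF.
  replace (CPSeries c 0) with (RtoC 1) in HF.
  2:{ unfold CPSeries; rewrite !PSeries_0; unfold c; rewrite hermite_coef_0.
      simpl; unfold Re, Im, Cmult, RtoC; simpl; f_equal; ring. }
  replace (2 * t * w - w * w)%C with (2 * t * w * 1 + - (w * w) * 1 * 1)%C by ring.
  rewrite <- (Cmult_1_l (cexp _)), <- HF.
  eapply is_series_ext; [|exact (is_series_CPSeries c Hc 1)].
  intro n; cbv beta; rewrite pow1; apply Cmult_1_r.
Qed.

Lemma sqrt_div_sq_mul (a b g : R) :
  0 <= a -> 0 < b -> 0 < g -> sqrt (a / (g ^ 2 * b)) = sqrt (a * b) / (g * b).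
Proof.
  intros Ha Hb Hg.
  replace (a / (g ^ 2 * b)) with (a * b / (g * b) ^ 2) by (field; lra).
  rewrite sqrt_div_alt, sqrt_pow2; [reflexivity|nra|apply pow_lt; nra].
Qed.

Lemma e_rbf_mul_psi (gamma : R) (n : nat) (z : C) (x : R) :
  0 < gamma ->
  Cmult (e_rbf gamma n z) (RtoC (psi (2 / gamma ^ 2) n x))
  = (cexp (- (z * z) / RtoC (gamma ^ 2))
     * RtoC (Rpower (2 / gamma ^ 2 / PI) (1 / 4) * exp (- (2 / gamma ^ 2) * x ^ 2 / 2))
     * (RtoC (hermite_coef (sqrt (2 / gamma ^ 2) * x) n) * Cpow (z / RtoC gamma) n))%C.
Proof.
  intros Hg.
  unfold e_rbf, psi, hermite_coef.
  change (Defs.Cpow z n) with (Cpow z n).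
  assert (Hz : Cpow z n = (RtoC (gamma ^ n) * Cpow (z / RtoC gamma) n)%C).
  { rewrite RtoC_pow, <- Cpow_mult_l; f_equal.
    field; intro H; apply RtoC_inj in H; lra. }
  rewrite Hz, Nat.mul_comm, pow_mult, sqrt_div_sq_mul;
    [|apply pow_le; lra|apply INR_fact_lt_0|apply pow_lt; lra].
  set (q := sqrt (2 ^ n * INR (fact n))).
  assert (Hq : 0 < q) by (apply sqrt_lt_R0, Rmult_lt_0_compat;
    [apply pow_lt; lra|apply INR_fact_lt_0]).
  pose proof (INR_fact_lt_0 n). pose proof (pow_lt gamma n Hg).
  set (E := cexp (- (z * z) / RtoC (gamma ^ 2))).
  set (W := Cpow (z / RtoC gamma) n).
  transitivity (RtoC (q / (gamma ^ n * INR (fact n)) * gamma ^ n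
    * (Rpower (2 / gamma ^ 2 / PI) (1 / 4) / q * hermite n (sqrt (2 / gamma ^ 2) * x)
       * exp (- (2 / gamma ^ 2) * x ^ 2 / 2))) * (E * W))%C.
  { rewrite !RtoC_mult; ring. }
  transitivity (RtoC (Rpower (2 / gamma ^ 2 / PI) (1 / 4) * exp (- (2 / gamma ^ 2) * x ^ 2 / 2)
    * (hermite n (sqrt (2 / gamma ^ 2) * x) / INR (fact n))) * (E * W))%C.
  { f_equal; f_equal; field; lra. }
  rewrite !RtoC_mult; ring.
Qed.

Lemma A_SB_hermite_form (gamma : R) (z : C) (x : R) :
  0 < gamma ->
  A_SB (2 / gamma ^ 2) z x
  = (RtoC (Rpower (2 / gamma ^ 2 / PI) (1 / 4) * exp (- (2 / gamma ^ 2) * x ^ 2 / 2))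
     * cexp (2 * RtoC (sqrt (2 / gamma ^ 2) * x) * (z / RtoC gamma)
             - z / RtoC gamma * (z / RtoC gamma)))%C.
Proof.
  intros Hg.
  assert (Hsqrt : sqrt (2 / gamma ^ 2) = sqrt 2 / gamma).
  { rewrite sqrt_div_alt, sqrt_pow2; [reflexivity|lra|apply pow_lt; lra]. }
  unfold A_SB.
  rewrite (RtoC_mult (Rpower _ _)), <- Cmult_assoc, <- cexp_RtoC, <- cexp_plus, Hsqrt.
  do 2 f_equal.
  destruct z as [a b]; unfold Cplus, Cminus, Cmult, Copp, Cdiv, Cinv, RtoC; simpl.
  f_equal; field; lra.
Qed.

Theorem mainTheorem8 (gamma : R) (Hgamma : 0 < gamma) (z : C) (x : R) :
  is_series (fun n : nat => Cmult (e_rbf gamma n z) (RtoC (psi (2 / gamma ^ 2) n x)))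
    (Cmult (cexp (Cdiv (Copp (Cmult z z)) (RtoC (gamma ^ 2))))
           (A_SB (2 / gamma ^ 2) z x)).
Proof.
  rewrite A_SB_hermite_form, Cmult_assoc by exact Hgamma.
  eapply is_series_ext; [intro n; symmetry; apply e_rbf_mul_psi, Hgamma|].
  exact (is_series_scal _ _ _ (hermite_generating_function _ _)).
Qed.
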